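(* There is no perfect lattice code in $\mathcal{A}(n,n-2,\ell)$ if $n\ge 4$ and $\ell\ge 2$.
   Context: For integers $n\ge 1$, $0\le t\le n$, $\ell\ge 1$, let $\mathcal{S}(n,t,\ell)=\{\mathcal{E}\in\mathbb{Z}^n: 0\le\varepsilon_i\le\ell \text{ for all } i,\ w_H(\mathcal{E})\le t\}$, where $w_H$ is the number of nonzero coordinates. A lattice here is the set of integer combinations of $n$ linearly independent vectors of $\mathbb{Z}^n$. $\mathcal{A}(n,t,\ell)$ is the set of lattices $\mathcal{L}\subseteq\mathbb{Z}^n$ such that the translates $X+\mathcal{S}(n,t,\ell)$, $X\in\mathcal{L}$, are pairwise disjoint. Such $\mathcal{L}$ is perfect if these translates also cover $\mathbb{Z}^n$. *)

From HB Require Import structures.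
From mathcomp Require Import all_boot all_order all_algebra.
Set Implicit Arguments. Unset Strict Implicit. Unset Printing Implicit Defensive.
Import Order.TTheory GRing.Theory Num.Theory.
Local Open Scope ring_scope.

Definition wH (n : nat) (e : 'rV[int]_n) : nat := #|[set i : 'I_n | e 0 i != 0]|.

Definition inS (n t : nat) (l : int) (e : 'rV[int]_n) : Prop :=
  (forall i : 'I_n, 0 <= e 0 i <= l) /\ (wH e <= t)%N.

(* B : 'M[int]_n has as rows n vectors of Z^n; they are linearly independent
   (over Q, equivalently over R) iff the rational image of B is row-free. *)
Definition lin_indep (n : nat) (B : 'M[int]_n) : Prop :=
  row_free (map_mx (fun z : int => z%:~R : rat) B).

Definition in_lattice (n : nat) (B : 'M[int]_n) (x : 'rV[int]_n) : Prop :=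
  exists c : 'rV[int]_n, x = c *m B.

Definition lattice_packing (n t : nat) (l : int) (B : 'M[int]_n) : Prop :=
  forall X Y e1 e2 : 'rV[int]_n,
    in_lattice B X -> in_lattice B Y -> inS t l e1 -> inS t l e2 ->
    X + e1 = Y + e2 -> X = Y.

Definition lattice_covering (n t : nat) (l : int) (B : 'M[int]_n) : Prop :=
  forall z : 'rV[int]_n, exists X e : 'rV[int]_n,
    in_lattice B X /\ inS t l e /\ z = X + e.

Definition perfect_lattice_code (n t : nat) (l : int) (B : 'M[int]_n) : Prop :=
  lin_indep B /\ lattice_packing t l B /\ lattice_covering t l B.

From mathcomp Require Import all_boot all_order all_algebra.
From mathcomp Require Import zify.
Import Order.TTheory GRing.Theory Num.Theory.
Set Implicit Arguments. Unset Strict Implicit. Unset Printing Implicit Defensive.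
Local Open Scope ring_scope.

(** Write [u_k(c)] ([ones_but k c]) for the vector with [-c] at coordinate
    [k] and [1] elsewhere. Covering [u_k(0)], whose weight [n - 1] is too large to lie in
    [S(n, n-2, l)], forces the lattice to contain some [u_k(c)] with
    [0 <= c <= l]: otherwise the covering lattice point splits as a difference
    of two elements of [S], contradicting packing. Two such vectors for
    distinct coordinates [k, m] are incompatible with packing: if both [c]'s
    are below [l], then [u_k(c) + (c+1) e_k = u_m(c') + (c'+1) e_m] is the
    all-ones vector; if both equal [l], then [u_k(l) + u_m(l)] is the
    difference of the vector with [2] off [{k, m}] and the vector with [l - 1]
    on [{k, m}]. Among three coordinates two fall into the same case. *)

Section PerfectLatticeCode.

Variables (n : nat) (l : int).
Implicit Types (B : 'M[int]_n) (X e : 'rV[int]_n) (k m : 'I_n).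

Definition ones_but k (c : int) : 'rV[int]_n :=
  \row_i (if i == k then - c else 1).

Lemma wH_leq_card e (A : {set 'I_n}) :
  (forall i, e 0 i != 0 -> i \in A) -> (wH e <= #|A|)%N.
Proof.
move=> suppA; apply: subset_leq_card; apply/subsetP => i.
by rewrite inE; exact: suppA.
Qed.

Lemma inS_support t e (A : {set 'I_n}) :
  (forall i, 0 <= e 0 i <= l) -> (forall i, e 0 i != 0 -> i \in A) ->
  (#|A| <= t)%N -> inS t l e.
Proof. by move=> bnd suppA At; split=> //; exact: leq_trans (wH_leq_card suppA) At. Qed.

Lemma card_setC2 k m : k != m -> #|~: [set k; m]| = (n - 2)%N.
Proof. by move=> km; have := cardsC [set k; m]; rewrite cards2 km card_ord; lia. Qed.

Lemma wH_ones_but0 k : wH (ones_but k 0) = (n - 1)%N.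
Proof.
rewrite /wH (_ : [set i | _] = ~: [set k]); last first.
  by apply/setP => i; rewrite !inE mxE; case: (i == k).
by have := cardsC [set k]; rewrite cards1 card_ord; lia.
Qed.

Lemma in_lattice0 B : in_lattice B 0.
Proof. by exists 0; rewrite mul0mx. Qed.

Lemma in_latticeD B X Y :
  in_lattice B X -> in_lattice B Y -> in_lattice B (X + Y).
Proof. by move=> [c ->] [d ->]; exists (c + d); rewrite mulmxDl. Qed.

Lemma inS_scale_delta k (a : int) :
  (3 <= n)%N -> 0 <= a <= l -> inS (n - 2) l (a *: delta_mx 0 k).
Proof.
move=> n_ge3 a_bnd; apply: (@inS_support _ _ [set k]).
- by move=> i; rewrite !mxE eqxx mulr_natr; case: (i == k); lia.
- by move=> i; rewrite !mxE inE eqxx mulr_natr; case: (i == k).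
- by rewrite cards1; lia.
Qed.

Variable B : 'M[int]_n.
Hypothesis packB : lattice_packing (n - 2) l B.

Lemma packing_split X a b :
  in_lattice B X -> inS (n - 2) l a -> inS (n - 2) l b -> a = X + b -> X = 0.
Proof.
by move=> LX Sa Sb ab; symmetry; apply: (packB (in_lattice0 B) LX Sa Sb); rewrite add0r.
Qed.

(* [X] splits as [a - b] into its positive and negative parts, which lie
   in [S] because [X = u_k(0) - e] is [<= 1] everywhere and [<= 0] at [k, m]. *)
Lemma cover_ones_but0_support k m X e :
  1 <= l -> in_lattice B X -> inS (n - 2) l e -> ones_but k 0 = X + e ->
  m != k -> e 0 m = 0.
Proof.
move=> l_ge1 LX [e_bnd e_wt] cover mk; apply/eqP; apply: contraT => em.
have Xi i : X 0 i = (if i == k then 0 else 1) - e 0 i.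
  have := congr1 (fun M : 'rV[int]_n => M 0 i) cover.
  by rewrite /= !mxE; case: (i == k) => /=; lia.
pose a : 'rV[int]_n := \row_i (if 0 <= X 0 i then X 0 i else 0).
pose b : 'rV[int]_n := \row_i (if 0 <= X 0 i then 0 else - X 0 i).
have split_ab : a = X + b.
  by apply/rowP => i; rewrite !mxE; case: ifP => _; rewrite ?addr0 ?subrr.
have Sa : inS (n - 2) l a.
  apply: (@inS_support _ _ (~: [set k; m])); last by rewrite card_setC2 // eq_sym.
    move=> i; rewrite mxE; have := e_bnd i; rewrite Xi.
    by case: (i == k); case: ifP => h; lia.
  move=> i; rewrite mxE !inE negb_or; case: ifP => // Xi_ge0 Xi_neq0.
  apply/andP; split; apply/negP => /eqP Ei; subst i.
  - by move: Xi_ge0 Xi_neq0; rewrite Xi eqxx; have := e_bnd k; lia.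
  - by move: Xi_ge0 Xi_neq0; rewrite Xi (negbTE mk); have := e_bnd m; move: em; lia.
have Sb : inS (n - 2) l b.
  split.
    move=> i; rewrite mxE; have := e_bnd i; rewrite Xi.
    by case: (i == k); case: ifP => h; lia.
  apply: leq_trans e_wt; apply: subset_leq_card; apply/subsetP => i.
  by rewrite !inE mxE Xi; have := e_bnd i; case: (i == k); case: ifP => h; lia.
have X0 := packing_split LX Sa Sb split_ab.
have n_gt1 : (1 < n)%N.
  by have := max_card (mem [set k; m]); rewrite cards2 eq_sym mk card_ord.
by move: e_wt; rewrite X0 add0r in cover; rewrite -cover wH_ones_but0; lia.
Qed.

Lemma covering_ones_but k :
  1 <= l -> lattice_covering (n - 2) l B ->
  exists2 c : int, 0 <= c <= l & in_lattice B (ones_but k c).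
Proof.
move=> l_ge1 covB; have [X [e [LX [Se cover]]]] := covB (ones_but k 0).
exists (e 0 k); first by case: Se.
suff -> : ones_but k (e 0 k) = X by [].
apply/rowP => i; have := congr1 (fun M : 'rV[int]_n => M 0 i) cover.
rewrite /= !mxE; case: (i =P k) => [->|/eqP ik] /=; first lia.
by rewrite (cover_ones_but0_support l_ge1 LX Se cover ik); lia.
Qed.

Lemma no_short_ones_but_pair k m (ck cm : int) :
  (3 <= n)%N -> k != m -> 0 <= ck < l -> 0 <= cm < l ->
  in_lattice B (ones_but k ck) -> in_lattice B (ones_but m cm) -> False.
Proof.
move=> n_ge3 km ck_bnd cm_bnd Lk Lm.
have Sk : inS (n - 2) l ((ck + 1) *: delta_mx 0 k) by apply: inS_scale_delta; lia.
have Sm : inS (n - 2) l ((cm + 1) *: delta_mx 0 m) by apply: inS_scale_delta; lia.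
have all_ones : ones_but k ck + (ck + 1) *: delta_mx 0 k =
                ones_but m cm + (cm + 1) *: delta_mx 0 m.
  apply/rowP => i; rewrite !mxE eqxx /=.
  have [-> | ik] := eqVneq i k; first by rewrite (negbTE km) /=; lia.
  by have [_ | im] := eqVneq i m; rewrite /=; lia.
move/(congr1 (fun M : 'rV[int]_n => M 0 m)): (packB Lk Lm Sk Sm all_ones).
by rewrite /= !mxE eq_sym (negbTE km) eqxx; lia.
Qed.

Lemma no_full_ones_but_pair k m p :
  (4 <= n)%N -> 2 <= l -> k != m -> p != k -> p != m ->
  in_lattice B (ones_but k l) -> in_lattice B (ones_but m l) -> False.
Proof.
move=> n_ge4 l_ge2 km pk pm Lk Lm.
pose a : 'rV[int]_n := \row_i (if (i == k) || (i == m) then 0 else 2).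
pose b : 'rV[int]_n := \row_i (if (i == k) || (i == m) then l - 1 else 0).
have split_ab : a = (ones_but k l + ones_but m l) + b.
  apply/rowP => i; rewrite !mxE.
  have [-> | ik] := eqVneq i k; first by rewrite (negbTE km) /=; lia.
  by have [_ | im] := eqVneq i m; rewrite /=; lia.
have Sa : inS (n - 2) l a.
  apply: (@inS_support _ _ (~: [set k; m])); last by rewrite card_setC2.
    by move=> i; rewrite mxE; case: (_ || _); lia.
  by move=> i; rewrite mxE !inE; case: (_ || _); rewrite ?eqxx.
have Sb : inS (n - 2) l b.
  apply: (@inS_support _ _ [set k; m]); last by rewrite cards2 km; lia.
    by move=> i; rewrite mxE; case: (_ || _); lia.
  by move=> i; rewrite mxE !inE; case: (_ || _); rewrite ?eqxx.
move/(congr1 (fun M : 'rV[int]_n => M 0 p)): (packing_split (in_latticeD Lk Lm) Sa Sb split_ab).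
by rewrite /= !mxE (negbTE pk) (negbTE pm).
Qed.

Lemma no_ones_but_pair k m p (ck cm : int) :
  (4 <= n)%N -> 2 <= l -> k != m -> p != k -> p != m ->
  0 <= ck <= l -> 0 <= cm <= l -> (ck == l) = (cm == l) ->
  in_lattice B (ones_but k ck) -> in_lattice B (ones_but m cm) -> False.
Proof.
move=> n_ge4 l_ge2 km pk pm ck_bnd cm_bnd same Lk Lm.
have [ck_l | ck_lt] := eqVneq ck l.
  move: same; rewrite ck_l eqxx => /esym/eqP cm_l.
  by rewrite ck_l in Lk; rewrite cm_l in Lm; exact: no_full_ones_but_pair pk pm Lk Lm.
by apply: no_short_ones_but_pair km _ _ Lk Lm; move: same; rewrite (negbTE ck_lt); lia.
Qed.

End PerfectLatticeCode.

Theorem mainTheorem7 (n : nat) (l : int) :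
  (4 <= n)%N -> 2 <= l ->
  forall B : 'M[int]_n, ~ perfect_lattice_code (n - 2) l B.
Proof.
move=> n_ge4 l_ge2 B [_ [packB covB]].
have l_ge1 : 1 <= l by lia.
pose i0 : 'I_n := Ordinal (leq_trans (isT : 0 < 4)%N n_ge4).
pose i1 : 'I_n := Ordinal (leq_trans (isT : 1 < 4)%N n_ge4).
pose i2 : 'I_n := Ordinal (leq_trans (isT : 2 < 4)%N n_ge4).
have [c0 c0_bnd L0] := covering_ones_but packB i0 l_ge1 covB.
have [c1 c1_bnd L1] := covering_ones_but packB i1 l_ge1 covB.
have [c2 c2_bnd L2] := covering_ones_but packB i2 l_ge1 covB.
have ones_pair := no_ones_but_pair packB n_ge4 l_ge2.
have : [|| (c0 == l) == (c1 == l), (c0 == l) == (c2 == l) | (c1 == l) == (c2 == l)].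
  by case: (c0 == l); case: (c1 == l); case: (c2 == l).
case/or3P => /eqP same.
- by apply: (ones_pair _ _ i2 _ _ _ _ _ c0_bnd c1_bnd same L0 L1).
- by apply: (ones_pair _ _ i1 _ _ _ _ _ c0_bnd c2_bnd same L0 L2).
- by apply: (ones_pair _ _ i0 _ _ _ _ _ c1_bnd c2_bnd same L1 L2).
Qed.
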